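(* Assume $B$ is connected and let $n\ge1$. For a $\mathbb{K}$-linear map $\varphi\colon A\to B$ the following are equivalent: (i) for every $a\in A$, $R_\varphi(a,z)$ is a polynomial in $z$ of degree at most $n$, and it has degree exactly $n$ for some $a\in A$; (ii) $\varphi$ is a Frobenius $n$-homomorphism.
   Context: $\mathbb{K}=\mathbb{R}$ or $\mathbb{C}$; $A$ and $B$ are commutative associative unital $\mathbb{K}$-algebras. For a $\mathbb{K}$-linear map $\varphi\colon A\to B$ and $a\in A$, the characteristic function is $R_\varphi(a,z)=\exp\bigl(\varphi(\ln(1+az))\bigr)=1+\sum_{k\ge1}\psi_k(a)z^k\in B[[z]]$, with $\ln(1+az)=\sum_{k\ge1}(-1)^{k+1}a^kz^k/k$ and $\varphi$ applied coefficientwise. The Frobenius maps $\Phi_k\colon A^k\to B$ of $\varphi$ are defined by $\Phi_1=\varphi$ and $\Phi_{k+1}(a_1,\dots,a_{k+1})=\varphi(a_1)\Phi_k(a_2,\dots,a_{k+1})-\sum_{j=2}^{k+1}\Phi_k(a_2,\dots,a_{j-1},a_1a_j,a_{j+1},\dots,a_{k+1})$. A linear map $\varphi$ is a (Frobenius) $n$-homomorphism if $\varphi(1)=n\cdot1_B$ and $\Phi_k\equiv0$ for all $k\ge n+1$. The algebra $B$ is connected if for every $b\in B$ and $k\ge0$, $b(b-1)\cdots(b-k)=0$ implies $b=j\cdot1_B$ for some $j\in\{0,\dots,k\}$. *)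

From HB Require Import structures.
From mathcomp Require Import all_boot all_order all_algebra.
Set Implicit Arguments. Unset Strict Implicit. Unset Printing Implicit Defensive.
Import Order.TTheory GRing.Theory Num.Theory.
Local Open Scope ring_scope.

Section Frob.
Variables (K : numFieldType) (A B : comAlgType K) (phi : {linear A -> B}).

(* Truncation (at order k) of phi(ln(1 + a z)) = sum_{j>=1} phi((-1)^(j+1) a^j / j) z^j,
   as a polynomial in z with coefficients in B. *)
Definition lnpoly (a : A) (k : nat) : {poly B} :=
  \sum_(1 <= j < k.+1) (phi (((-1) ^+ j.+1 / j%:R) *: a ^+ j))%:P * 'X^j.

Definition exptrunc (k : nat) (p : {poly B}) : {poly B} :=
  \sum_(m < k.+1) ((m`!%:R : K)^-1 *: (1 : B))%:P * p ^+ m.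

(* psi_k(a) = coefficient of z^k in R_phi(a,z) = exp(phi(ln(1+az))).
   Since phi(ln(1+az)) has no constant term, only terms of order <= k of the
   logarithm and of the exponential series contribute to the z^k coefficient. *)
Definition psi (a : A) (k : nat) : B := (exptrunc k (lnpoly a k))`_k.

(* Frobenius maps: Frob k s = Phi_k(s) for s of size k (Frob 0 = 1, so that
   Frob 1 [:: a] = phi a). *)
Fixpoint Frob (k : nat) (s : seq A) : B :=
  match k with
  | 0 => 1
  | k'.+1 =>
      phi (head 0 s) * Frob k' (behead s)
      - \sum_(j < k') Frob k' (set_nth 0 (behead s) j (head 0 s * nth 0 (behead s) j))
  end.

Definition frobenius_hom (n : nat) : Prop :=
  phi 1 = n%:R /\ forall (k : nat) (s : seq A), size s = k -> (n < k)%N -> Frob k s = 0.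

End Frob.

Definition connected_alg (K : numFieldType) (B : comAlgType K) : Prop :=
  forall (b : B) (k : nat), \prod_(i < k.+1) (b - i%:R) = 0 ->
    exists j : nat, (j <= k)%N /\ b = j%:R.

From mathcomp Require Import all_boot all_order all_algebra zify ring.
Set Implicit Arguments. Unset Strict Implicit. Unset Printing Implicit Defensive.
Import Order.TTheory GRing.Theory Num.Theory.
Local Open Scope ring_scope.

(* The Frobenius maps Phi_k are symmetric and additive in each argument.  In
   characteristic zero this makes Phi_k vanish identically as soon as it
   vanishes on all diagonals (a, ..., a), and Newton's identity for
   R_phi(a, z) = exp(phi(ln(1 + a z))) gives Phi_k(a, ..., a) = k! psi_k(a).
   So "deg R_phi(a, _) <= n for all a" says exactly that Phi_(n+1) = 0, which
   propagates to every Phi_k with k > n.  Moreover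
   Phi_(k+1)(1, s) = (phi(1) - k) Phi_k(s), hence
   Phi_(n+1)(1, ..., 1) = prod_(i <= n) (phi(1) - i): if Phi_(n+1) = 0,
   connectedness makes phi(1) an integer j <= n, and j < n would kill Phi_n,
   i.e. every psi_n(a).  Conversely phi(1) = n gives psi_n(1) = 1. *)

Section SeqLemmas.
Variables (T : eqType) (x0 : T).
Implicit Types (s t : seq T) (Is : seq nat).

Lemma set_nth_cat s j v : (j < size s)%N ->
  set_nth x0 s j v = take j s ++ v :: drop j.+1 s.
Proof.
elim: s j => [|y s IH] [|j] //= jl; first by rewrite drop0.
by rewrite IH.
Qed.

Lemma set_nth_nth s j : (j < size s)%N -> set_nth x0 s j (nth x0 s j) = s.
Proof. by move=> jl; rewrite set_nth_cat // -drop_nth // cat_take_drop. Qed.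

Lemma perm_set_nth s j v : (j < size s)%N ->
  perm_eq (set_nth x0 s j v) (v :: take j s ++ drop j.+1 s).
Proof. by move=> jl; rewrite set_nth_cat // -cat1s perm_catCA. Qed.

Lemma size_take_drop_succ s j : (j < size s)%N ->
  size (take j s ++ drop j.+1 s) = (size s).-1.
Proof. by move=> jl; rewrite size_cat size_take jl size_drop; lia. Qed.

Lemma perm_map_nth s Is : perm_eq Is (iota 0 (size s)) ->
  perm_eq [seq nth x0 s i | i <- Is] s.
Proof. by move=> /(perm_map (nth x0 s)); rewrite map_nth_iota0 // take_size. Qed.

Lemma set_nth_map_nth t Is j v : perm_eq Is (iota 0 (size t)) -> (j < size Is)%N ->
  set_nth x0 [seq nth x0 t i | i <- Is] j v
  = [seq nth x0 (set_nth x0 t (nth 0%N Is j) v) i | i <- Is].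
Proof.
move=> pI jI; have uI : uniq Is by rewrite (perm_uniq pI) iota_uniq.
apply: (@eq_from_nth _ x0); first by rewrite size_set_nth !size_map; apply/maxn_idPr.
move=> p; rewrite size_set_nth size_map (maxn_idPr jI) => pI'.
rewrite nth_set_nth /= !(nth_map 0%N) // nth_set_nth /= (nth_uniq 0%N pI' jI uI).
by case: eqP.
Qed.

End SeqLemmas.

Lemma cat_take_drop_nseq (T : Type) (x : T) k j : (j <= k)%N ->
  take j (nseq k.+1 x) ++ drop j.+1 (nseq k.+1 x) = nseq k x.
Proof. by move=> jk; rewrite take_nseq ?drop_nseq -?nseqD; [congr nseq; lia|lia]. Qed.

Lemma big_perm_iota (R : Type) (idx : R) (op : Monoid.com_law idx) k (G : nat -> R) Is :
  perm_eq Is (iota 0 k) ->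
  \big[op/idx]_(j < k) G (nth 0%N Is j) = \big[op/idx]_(i < k) G i.
Proof.
move=> pI; have sI : size Is = k by rewrite (perm_size pI) size_iota.
rewrite -(big_mkord xpredT (G \o nth 0%N Is)) -(big_mkord xpredT G) -{1}sI.
by rewrite -(big_nth 0%N xpredT G) (perm_big _ pI) /index_iota subn0.
Qed.

Section TruncatedPowers.
Variable R : comNzRingType.
Implicit Types P Q S : {poly R}.

Lemma coefM_eq_low P Q S M : (forall j, (j <= M)%N -> P`_j = Q`_j) ->
  forall j, (j <= M)%N -> (P * S)`_j = (Q * S)`_j.
Proof.
move=> PQ j jM; rewrite !coefM; apply: eq_bigr => l _.
by rewrite PQ // (leq_trans _ jM) // -ltnS.
Qed.

Lemma coef_expr_eq_low P Q M m : (forall j, (j <= M)%N -> P`_j = Q`_j) ->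
  forall j, (j <= M)%N -> (P ^+ m)`_j = (Q ^+ m)`_j.
Proof.
move=> PQ; elim: m => [//|m IH] j jM.
by rewrite !exprS (coefM_eq_low _ PQ) // mulrC [Q * _]mulrC (coefM_eq_low _ IH).
Qed.

Lemma coef_expr_lt P m j : P`_0 = 0 -> (j < m)%N -> (P ^+ m)`_j = 0.
Proof.
move=> P0; elim: m j => [//|m IH] j jm.
rewrite exprS coefM big1 // => -[[|l] /= lj] _; first by rewrite P0 mul0r.
by rewrite IH ?mulr0 //; lia.
Qed.

End TruncatedPowers.

Section CharZero.
Variable K : numFieldType.

Lemma mulrn_eq0_lmod (V : lmodType K) (v : V) m : (0 < m)%N -> v *+ m = 0 -> v = 0.
Proof.
move=> m_gt0 /eqP; rewrite -scaler_nat scaler_eq0 pnatr_eq0.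
by rewrite eqn0Ngt m_gt0 => /eqP.
Qed.

Variable B : comAlgType K.

(* [B] need not be a domain: ['X - m%:R] is monic, and multiplication by
   [(t - m)%:R] is injective on the K-vector space [B]. *)
Lemma poly_natr_roots_eq0 (p : {poly B}) m :
  (forall t : nat, (m <= t)%N -> p.[t%:R] = 0) -> p = 0.
Proof.
have [n] := ubnP (size p); elim: n p m => [//|n IH] p m sp p_roots.
have /factor_theorem [q pq] : root p m%:R by apply/eqP/p_roots.
rewrite pq in sp p_roots *.
have [->|q_neq0] := eqVneq q 0; first by rewrite mul0r.
rewrite (IH q m.+1) ?mul0r //.
  by move: sp; rewrite size_Mmonic ?monicXsubC // size_XsubC addn2.
move=> t mt; apply: (@mulrn_eq0_lmod _ _ (t - m)); first by rewrite subn_gt0.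
have := p_roots t (ltnW mt); rewrite hornerM hornerXsubC -natrB ?(ltnW mt) //.
by rewrite mulr_natr.
Qed.

Definition invfact m : B := (m`!%:R : K)^-1 *: 1.

Lemma invfactS m : invfact m.+1 *+ m.+1 = invfact m.
Proof.
rewrite /invfact scalerMnl factS natrM invfM -mulr_natr mulrAC mulVf ?mul1r //.
by rewrite pnatr_eq0.
Qed.

Lemma coef_exptrunc (P : {poly B}) M i : P`_0 = 0 -> (i <= M)%N ->
  (exptrunc M P)`_i = \sum_(m < i.+1) invfact m * (P ^+ m)`_i.
Proof.
move=> P0 iM; rewrite coef_sum.
rewrite (big_ord_widen M.+1 (fun m => invfact m * (P ^+ m)`_i)) //.
rewrite [RHS]big_mkcond; apply: eq_bigr => m _; rewrite coefCM.
by case: ifP => // mi; rewrite coef_expr_lt ?mulr0 // ltnNge -ltnS mi.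
Qed.

Lemma deriv_exptrunc k (L : {poly B}) : (exptrunc k.+1 L)^`() = L^`() * exptrunc k L.
Proof.
rewrite /exptrunc (big_endo _ (@derivD _) (@deriv0 _)) big_ord_recl.
rewrite deriv_mulC expr0 derivC mulr0 add0r.
rewrite mulr_sumr; apply: eq_bigr => m _.
rewrite deriv_mulC deriv_exp lift0 /= mulrnAr -mulrnAl -polyCMn.
by rewrite -/(invfact m.+1) invfactS mulrCA.
Qed.

End CharZero.

Lemma prod_natr_sub (R : pzRingType) n : \prod_(i < n) ((n%:R : R) - i%:R) = n`!%:R.
Proof.
rewrite -ffactnn ffact_prod natr_prod; apply: eq_bigr => i _.
by rewrite natrB // ltnW.
Qed.

Section Frobenius.
Variables (K : numFieldType) (A B : comAlgType K) (phi : {linear A -> B}).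
Local Notation F := (Frob phi).

Definition mul_at (x : A) (s : seq A) j := set_nth 0 s j (x * nth 0 s j).

Lemma FrobS k x s : F k.+1 (x :: s) = phi x * F k s - \sum_(j < k) F k (mul_at x s j).
Proof. by []. Qed.

Lemma mul_atC x y s i j : mul_at y (mul_at x s i) j = mul_at x (mul_at y s j) i.
Proof.
rewrite /mul_at !nth_set_nth /=; have [->|ji] := eqVneq j i.
  by rewrite set_set_nth eqxx [RHS]set_set_nth eqxx mulrCA.
by rewrite set_set_nth eq_sym (negbTE ji).
Qed.

Lemma mul_at0 x y t : mul_at x (y :: t) 0 = x * y :: t.
Proof. by []. Qed.

Lemma mul_atS x y t j : mul_at x (y :: t) j.+1 = y :: mul_at x t j.
Proof. by []. Qed.

Lemma Frob_cons2 k x y t : F k.+2 (x :: y :: t) =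
  phi x * phi y * F k t - phi x * \sum_(i < k) F k (mul_at y t i)
  - phi y * \sum_(i < k) F k (mul_at x t i) - F k.+1 (x * y :: t)
  + \sum_(i < k) \sum_(l < k) F k (mul_at y (mul_at x t i) l).
Proof.
rewrite FrobS big_ord_recl mul_at0 FrobS.
under [\sum_(i < k) F k.+1 _]eq_bigr => i _ do rewrite lift0 mul_atS FrobS.
by rewrite sumrB -mulr_sumr; ring.
Qed.

Lemma Frob_swap k x y t : F k.+2 (x :: y :: t) = F k.+2 (y :: x :: t).
Proof.
rewrite !Frob_cons2 exchange_big /=.
under [\sum_(i < k) \sum_(l < k) F k (mul_at x _ l)]eq_bigr => i _
  do under eq_bigr => l _ do rewrite -mul_atC.
rewrite (mulrC x) (mulrC (phi y)); ring.
Qed.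

Lemma Frob_cons_perm k x t t' :
  (forall s s', size s = k -> perm_eq s s' -> F k s = F k s') ->
  size t = k -> perm_eq t t' -> F k.+1 (x :: t) = F k.+1 (x :: t').
Proof.
move=> Fk_perm tk tt'; rewrite !FrobS (Fk_perm t t') //; congr (_ - _).
have /(perm_iotaP 0) [Is pI ->] : perm_eq t' t by rewrite perm_sym.
rewrite tk in pI; have sI : size Is = k by rewrite (perm_size pI) size_iota.
rewrite -(big_perm_iota +%R (fun i => F k (mul_at x t i)) pI).
apply: eq_bigr => j _; have jI : (j < size Is)%N by rewrite sI.
rewrite /mul_at (nth_map 0%N) // set_nth_map_nth ?tk //.
symmetry; apply: Fk_perm; first by rewrite size_map.
apply: perm_map_nth.
have : nth 0%N Is j \in iota 0 k by rewrite -(perm_mem pI) mem_nth.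
by rewrite mem_iota add0n size_set_nth tk => /andP [_ /maxn_idPr ->].
Qed.

Lemma Frob_perm k s s' : size s = k -> perm_eq s s' -> F k s = F k s'.
Proof.
elim: k s s' => [//|k IH] [//|x t] s' [tk] pss'.
case: s' pss' => [|y t'] pss'; first by have [] := perm_size pss'.
have [exy|xy] := eqVneq x y.
  by rewrite -exy in pss' *; apply: Frob_cons_perm => //; rewrite -(perm_cons x).
have : y \in x :: t by rewrite (perm_mem pss') mem_head.
rewrite in_cons eq_sym (negbTE xy) => yt.
case: k IH tk => [|k] IH tk; first by case: t tk yt {pss'}.
rewrite (Frob_cons_perm x IH tk (perm_to_rem yt)) Frob_swap.
apply: Frob_cons_perm => //; first by rewrite /= size_rem // tk.
rewrite -(perm_cons y); apply: perm_trans pss'.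
have /= -> := perm_catCA [:: y] [:: x] (rem y t).
by rewrite perm_cons perm_sym perm_to_rem.
Qed.

Lemma Frob_set_nth k s j v : size s = k.+1 -> (j < k.+1)%N ->
  F k.+1 (set_nth 0 s j v) = F k.+1 (v :: take j s ++ drop j.+1 s).
Proof.
move=> sk jk; apply: Frob_perm; last by rewrite perm_set_nth ?sk.
by rewrite size_set_nth sk (maxn_idPr jk).
Qed.

Lemma FrobD k x y s : size s = k ->
  F k.+1 (x + y :: s) = F k.+1 (x :: s) + F k.+1 (y :: s).
Proof.
elim: k s x y => [|k IH] s x y sk.
  by rewrite !FrobS !big_ord0 !subr0 raddfD mulrDl.
rewrite !FrobS raddfD mulrDl addrACA -opprD -big_split; congr (_ - _).
apply: eq_bigr => j _; have jk : (j < size s)%N by rewrite sk.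
have rest_k : size (take j s ++ drop j.+1 s) = k by rewrite size_take_drop_succ // sk.
by rewrite /mul_at !Frob_set_nth // mulrDl IH.
Qed.

Lemma Frob_mulrn k x m s : size s = k -> F k.+1 (x *+ m :: s) = F k.+1 (x :: s) *+ m.
Proof.
move=> sk; elim: m => [|m IHm]; last by rewrite !mulrS FrobD // IHm.
by rewrite !mulr0n; apply: (addrI (F k.+1 (0 :: s))); rewrite -FrobD // !addr0.
Qed.

Section Polarization.
Variables (k : nat) (a d : A) (c : seq A).

(* For [i = l = 0] and [j = m], this is [F k.+1 (nseq m w ++ c)] at
   [w = a + t d], a polynomial in [t] whose coefficient of [t] is
   [m * F k.+1 (d :: nseq m.-1 a ++ c)]: so that coefficient vanishes as soon
   as [F k.+1] vanishes on [nseq m w ++ c] for every [w]. *)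
Definition Fblocks t i j l :=
  F k.+1 (nseq j (a + d *+ t) ++ nseq i d ++ nseq l a ++ c).

Lemma Fblocks_expand t i j l : (j + i + l + size c = k)%N ->
  Fblocks t i j.+1 l = Fblocks t i j l.+1 + Fblocks t i.+1 j l *+ t.
Proof.
move=> sz; rewrite /Fblocks; set w := a + d *+ t.
set r := nseq j w ++ nseq i d ++ nseq l a ++ c.
have rk : size r = k by rewrite !size_cat !size_nseq !addnA.
rewrite -[nseq j.+1 w ++ _]/(w :: r) FrobD // Frob_mulrn //.
congr (_ + _ *+ _); apply: Frob_perm; rewrite /= ?rk //.
  have /= := perm_catCA [:: a] (nseq j w ++ nseq i d) (nseq l a ++ c).
  by rewrite -!catA /= => ->.
by have /= -> := perm_catCA [:: d] (nseq j w) (nseq i d ++ nseq l a ++ c).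
Qed.

Lemma Fblocks_poly j i l : (j + i + l + size c = k.+1)%N ->
  exists p : {poly B}, [/\ forall t, p.[t%:R] = Fblocks t i j l,
     p`_0 = Fblocks 0 i 0 (l + j) & p`_1 = Fblocks 0 i.+1 0 (l + j).-1 *+ j].
Proof.
elim: j i l => [|j IH] i l sz.
  by exists (Fblocks 0 i 0 l)%:P; split=> [t||]; rewrite ?hornerC ?coefC ?addn0.
have [|p1 [h1 a1 b1]] := IH i l.+1; first by move: sz; rewrite !addSn !addnS.
have [|p2 [h2 a2 b2]] := IH i.+1 l; first by move: sz; rewrite !addSn !addnS.
exists (p1 + 'X * p2); split.
- move=> t; rewrite hornerD mulrC hornerMX h1 h2 mulr_natr Fblocks_expand //.
  by move: sz; rewrite !addSn => -[].
- by rewrite coefD coefXM /= addr0 a1 addSnnS.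
- by rewrite coefD coefXM /= b1 a2 addSn /= mulrS addrC addnS.
Qed.

Lemma Frob_polar_step m : (0 < m)%N -> (m + size c = k.+1)%N ->
  (forall w, F k.+1 (nseq m w ++ c) = 0) -> F k.+1 (d :: nseq m.-1 a ++ c) = 0.
Proof.
move=> m_gt0 sz Fw0.
have [|p [p_val _ p1]] := @Fblocks_poly m 0 0; first by rewrite !addn0.
have p0 : p = 0.
  by apply: (@poly_natr_roots_eq0 _ _ _ 0) => t _; rewrite p_val; apply: Fw0.
by move: p1; rewrite p0 coef0 add0n => /esym /(mulrn_eq0_lmod m_gt0).
Qed.

End Polarization.

Lemma Frob_polarization k : (forall w, F k.+1 (nseq k.+1 w) = 0) ->
  forall s, size s = k.+1 -> F k.+1 s = 0.
Proof.
move=> Fdiag0.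
suff Fmixed0 : forall r, (r <= k.+1)%N -> forall c, size c = r -> forall w,
    F k.+1 (nseq (k.+1 - r) w ++ c) = 0.
  by move=> s sk; have := Fmixed0 k.+1 (leqnn _) s sk 0; rewrite subnn.
elim=> [|r IH] rk c sc w; first by case: c sc => // _; rewrite cats0 subn0.
case: c sc => [//|d c] [sc].
rewrite (@Frob_perm _ _ (d :: nseq (k.+1 - r).-1 w ++ c)).
- apply: Frob_polar_step; first by rewrite subn_gt0.
    by rewrite sc subnK // ltnW.
  by move=> w'; apply: IH; rewrite // ltnW.
- by rewrite size_cat size_nseq /= sc subnK.
- have /= -> := perm_catCA (nseq (k.+1 - r.+1) w) [:: d] c.
  by rewrite perm_cons subSS subSn.
Qed.

Lemma Frob_set_nseq k x v j : (j < k.+1)%N ->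
  F k.+1 (set_nth 0 (nseq k.+1 x) j v) = F k.+1 (v :: nseq k x).
Proof. by move=> jk; rewrite Frob_set_nth ?size_nseq ?cat_take_drop_nseq. Qed.

Lemma Frob_cons1 k s : size s = k -> F k.+1 (1 :: s) = (phi 1 - k%:R) * F k s.
Proof.
move=> sk; rewrite FrobS (eq_bigr (fun _ => F k s)) => [|j _]; last first.
  by rewrite /mul_at mul1r set_nth_nth // sk.
by rewrite sumr_const card_ord mulrBl mulr_natl.
Qed.

Lemma Frob_nseq1 k : F k (nseq k 1) = \prod_(i < k) (phi 1 - i%:R).
Proof.
elim: k => [|k IH]; first by rewrite big_ord0.
by rewrite -[nseq _ _]/(1 :: nseq k 1) Frob_cons1 ?size_nseq // IH big_ord_recr mulrC.
Qed.

Definition Frob_vanishes k := forall s : seq A, size s = k -> F k s = 0.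

Lemma Frob_vanishesS k : Frob_vanishes k -> Frob_vanishes k.+1.
Proof.
move=> Fk0 [//|x t] [tk]; rewrite FrobS Fk0 // mulr0 sub0r big1 ?oppr0 // => j _.
by apply: Fk0; rewrite size_set_nth tk; apply/maxn_idPr.
Qed.

Lemma Frob_vanishes_ge m k : Frob_vanishes m -> (m <= k)%N -> Frob_vanishes k.
Proof.
move=> Fm0; elim: k => [|k IH]; first by rewrite leqn0 => /eqP <-.
by rewrite leq_eqVlt ltnS => /predU1P [<- //|/IH /Frob_vanishesS].
Qed.

Section CharacteristicFunction.
Variable a : A.
Local Notation psi := (psi phi a).

Lemma coef_lnpoly N i : (lnpoly phi a N)`_i =
  if (0 < i <= N)%N then phi (((-1) ^+ i.+1 / i%:R) *: a ^+ i) else 0.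
Proof.
rewrite /lnpoly coef_sum (eq_bigr (fun j =>
    if j == i then phi (((-1) ^+ j.+1 / j%:R) *: a ^+ j) else 0)) => [|j _].
  by rewrite -big_mkcond big_nat1_eq.
by rewrite coefCM coefXn eq_sym; case: eqP => [->|_]; rewrite ?mulr1 ?mulr0.
Qed.

Lemma coef_exptrunc_lnpoly M N i : (i <= M)%N -> (i <= N)%N ->
  (exptrunc M (lnpoly phi a N))`_i = psi i.
Proof.
move=> iM iN; rewrite /psi !coef_exptrunc ?coef_lnpoly //.
apply: eq_bigr => m _; congr (_ * _); apply: (coef_expr_eq_low (M := i)) => // j ji.
by rewrite !coef_lnpoly ji (leq_trans ji iN).
Qed.

Lemma psi0 : psi 0 = 1.
Proof. by rewrite /psi /exptrunc big_ord1 expr0 mulr1 coefC /= invr1 scale1r. Qed.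

(* [(k + 1) psi (k + 1)] is the z^k coefficient of
   R' = phi(a / (1 + a z)) R. *)
Lemma psi_Newton k : psi k.+1 *+ k.+1 =
  \sum_(j < k.+1) (-1) ^+ j *: (phi (a ^+ (1 + j)) * psi (k - j)).
Proof.
rewrite -[psi k.+1]/((exptrunc k.+1 (lnpoly phi a k.+1))`_k.+1) -coef_deriv.
rewrite deriv_exptrunc coefM; apply: eq_bigr => j _.
rewrite coef_deriv coef_exptrunc_lnpoly ?leq_subr ?(leq_trans (leq_subr _ _)) //.
rewrite coef_lnpoly /= ltn_ord linearZ /= scalerMnl -scalerAl; congr (_ *: _).
by rewrite -mulr_natr divfK ?pnatr_eq0 // !exprS !mulN1r opprK.
Qed.

Lemma Frob_pow_nseq k m : F k.+1 (a ^+ m :: nseq k a) =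
  (\sum_(j < k.+1) (-1) ^+ j *: (phi (a ^+ (m + j)) * psi (k - j))) *+ k`!.
Proof.
elim: k m => [|k IH] m.
  by rewrite FrobS big_ord0 subr0 big_ord1 expr0 scale1r addn0 psi0.
have Fdiag : F k.+1 (nseq k.+1 a) = psi k.+1 *+ k.+1`!.
  by rewrite -[nseq _ _]/(a ^+ 1 :: nseq k a) IH factS mulrnA psi_Newton.
rewrite FrobS Fdiag (eq_bigr (fun _ => F k.+1 (a ^+ m.+1 :: nseq k a))).
  2: by move=> j _; rewrite /mul_at nth_nseq ltn_ord -exprSr Frob_set_nseq.
rewrite sumr_const card_ord IH -mulrnA mulnC -factS mulrnAr -mulrnBl.
congr (_ *+ _); rewrite [RHS]big_ord_recl expr0 scale1r addn0 subn0.
congr (_ + _); rewrite -sumrN; apply: eq_bigr => j _.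
by rewrite lift0 exprS mulN1r scaleNr addnS -addSn subSS.
Qed.

Lemma Frob_nseq k : F k (nseq k a) = psi k *+ k`!.
Proof.
case: k => [|k]; first by rewrite psi0.
by rewrite -[nseq _ _]/(a ^+ 1 :: nseq k a) Frob_pow_nseq factS mulrnA psi_Newton.
Qed.

End CharacteristicFunction.

Lemma Frob_vanishesP k : (0 < k)%N -> Frob_vanishes k <-> forall a, psi phi a k = 0.
Proof.
case: k => [//|k] _; split=> [Fk0 a | psi0_k].
  by apply: (mulrn_eq0_lmod (fact_gt0 k.+1)); rewrite -Frob_nseq Fk0 ?size_nseq.
by apply: Frob_polarization => w; rewrite Frob_nseq psi0_k mul0rn.
Qed.

Lemma psi1_eq1 n : phi 1 = n%:R -> psi phi 1 n = 1.
Proof.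
move=> phi1; apply/eqP; rewrite -subr_eq0; apply/eqP.
apply: (mulrn_eq0_lmod (fact_gt0 n)).
by rewrite mulrnBl -Frob_nseq Frob_nseq1 phi1 prod_natr_sub subrr.
Qed.

Lemma phi1_connected n : connected_alg B ->
  Frob_vanishes n.+1 -> ~ Frob_vanishes n -> phi 1 = n%:R.
Proof.
move=> connB Fn1_0 Fn_neq0.
have [|j [jn phi1]] := connB (phi 1) n; first by rewrite -Frob_nseq1 Fn1_0 ?size_nseq.
suff /eqP jn' : j == n by rewrite phi1 jn'.
rewrite eqn_leq jn leqNgt; apply/negP => jn'; apply: Fn_neq0 => s sn.
apply: (@mulrn_eq0_lmod _ _ _ (n - j)); first by rewrite subn_gt0.
have -> : F n s *+ (n - j) = - ((phi 1 - n%:R) * F n s).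
  by rewrite phi1 -opprB -natrB ?(ltnW jn') // mulNr opprK mulr_natl.
by rewrite -Frob_cons1 // Fn1_0 ?oppr0 //= sn.
Qed.

End Frobenius.

Theorem mainTheorem4 (K : numFieldType) (A B : comAlgType K)
    (phi : {linear A -> B}) (n : nat) :
  connected_alg B -> (1 <= n)%N ->
  ((forall (a : A) (k : nat), (n < k)%N -> psi phi a k = 0) /\
   (exists a : A, psi phi a n != 0))
  <-> frobenius_hom phi n.
Proof.
move=> connB n_gt0; split=> [[psi_gt [a0 psi_n_neq0]] | [phi1 F_gt]].
- have Fn1_0 : Frob_vanishes phi n.+1.
    by apply/Frob_vanishesP => // a; apply: psi_gt.
  have Fn_neq0 : ~ Frob_vanishes phi n.
    by move/(Frob_vanishesP phi n_gt0)/(_ a0)/eqP; apply/negP.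
  split; first exact: phi1_connected.
  by move=> k s sk nk; apply: Frob_vanishes_ge Fn1_0 nk s sk.
- split=> [a k nk|]; last by exists 1; rewrite psi1_eq1 ?oner_neq0.
  move: a; apply/(Frob_vanishesP phi (ltn_trans n_gt0 nk)) => s sk.
  exact: F_gt.
Qed.
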